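(* In the setting described in the context (node-symmetric conflict graph $G$, channel states in $\{0,1\}$, $q_J=q_K$ whenever $G_J\cong G_K$), if all primaries use the strategy $\mathrm{SP}_{sym}$, then every node $a\in V$ is offered by a primary with the same probability $\alpha_a$, and consequently the expected payoff a primary obtains at a node where it offers its channel is the same for every node of $G$.
   Context: Model. $l$ primaries; $m$ secondaries at each node of $G=(V,E)$, integers $1\le m<l$. Each primary's channel state vector $J\in\{0,1\}^V$ (1 = available) has probability $q_J$, i.i.d. across primaries, with $q_{(0,\dots,0)}>0$; $G_J$ is the subgraph induced by $\{a:J_a=1\}$. Constants $c,v$; $g_1$ strictly increasing continuous, $f_1=g_1^{-1}$. At each node the $\min(Y,m)$ lowest-penalty offers among the $Y$ offers with penalty $\le v$ are sold (ties uniformly random); a sale at penalty $x$ earns $f_1(x)-c$. $G$ is node symmetric: for all $a,b$ there is an automorphism $F$ of $G$ with $F(a)=b$. $\mathrm{SP}_{sym}$: with state vector $J\ne0$, a primary selects each maximum (largest-cardinality) independent set of $G_J$ with equal probability and no other set; at a selected node $a$ it draws its penalty from the CDF $\phi^{(a)}$ with $\phi^{(a)}(x)=0$ for $x<g_1(p_a)$, $\frac1{\alpha_a}w^{-1}\!\left(\frac{f_1(x)-p_a}{f_1(x)-c}\right)$ for $g_1(p_a)\le x\le v$, $1$ for $x>v$, where $\alpha_a$ is the probability the selection rule offers at $a$, $p_a=c+(f_1(v)-c)W(\alpha_a)$, $w(x)=\sum_{i=m}^{l-1}\binom{l-1}{i}x^i(1-x)^{l-1-i}$, $W=1-w$. 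*)

From HB Require Import structures.
From mathcomp Require Import all_boot all_order all_algebra.
From mathcomp Require Import boolp reals.
From mathcomp Require classical_sets.
Set Implicit Arguments. Unset Strict Implicit. Unset Printing Implicit Defensive.
Import Order.TTheory GRing.Theory Num.Theory.
Local Open Scope ring_scope.

Section Graphs.
Variable V : finType.
Variable e : rel V.

Definition simple_graph := symmetric e /\ irreflexive e.

Definition automorphism (F : V -> V) := bijective F /\ forall x y, e (F x) (F y) = e x y.

Definition node_symmetric := forall a b : V, exists F, automorphism F /\ F a = b.

Definition induced_iso (J K : {set V}) :=
  exists h : V -> V, [/\ {in J &, injective h}, h @: J = K &
                       {in J &, forall x y, e (h x) (h y) = e x y}].

Definition independent (I : {set V}) := [forall x in I, forall y in I, ~~ e x y].

Definition max_indep (J : {set V}) : {set {set V}} :=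
  [set I : {set V} | [&& independent I, I \subset J &
     [forall I' : {set V}, (independent I' && (I' \subset J)) ==> (#|I'| <= #|I|)%N]]].
End Graphs.

Section Model.
Variable R : realType.
Variable V : finType.
Variable e : rel V.

(* probability that a primary playing SP_sym offers at node a:
   sum over nonzero state vectors J of q_J times the probability that a maximum
   independent set of G_J chosen uniformly at random contains a *)
Definition alpha (q : {set V} -> R) (a : V) : R :=
  \sum_(J : {set V} | J != set0)
     q J * (#|[set I in max_indep e J | a \in I]|%:R / #|max_indep e J|%:R).
End Model.

Section Payoff.
Variable R : realType.
Variables (l m : nat).

(* w(x) = P(Bin(l-1,x) >= m), W = 1 - w *)
Definition w (x : R) : R :=
  \sum_(m <= i < l) ('C(l.-1, i))%:R * x ^+ i * (1 - x) ^+ (l.-1 - i).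
Definition W (x : R) : R := 1 - w x.

Definition winv (y : R) : R := classical_sets.xget 0 (fun x : R => 0 <= x <= 1 /\ w x = y).

Variables (c v : R) (f1 g1 : R -> R).

Definition price (al : R) : R := c + (f1 v - c) * W al.

Definition phi (al : R) (x : R) : R :=
  if x < g1 (price al) then 0
  else if x <= v then al^-1 * winv ((f1 x - price al) / (f1 x - c))
  else 1.

(* payoff of a primary offering at penalty x at a node offered (by each other primary)
   with probability al, the other l-1 primaries using phi: the offer is sold iff fewer
   than m of the other l-1 primaries offer there at a lower penalty (ties have prob. 0),
   and x <= v. *)
Definition payoff (al : R) (x : R) : R :=
  if x <= v then (f1 x - c) * W (al * phi al x) else 0.
End Payoff.

Definition continuousR (R : realType) (g : R -> R) :=
  forall x eps : R, 0 < eps -> exists2 delta : R, 0 < delta &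
    forall y, `|y - x| < delta -> `|g y - g x| < eps.

From HB Require Import structures.
From mathcomp Require Import all_boot all_order all_algebra.
From mathcomp Require Import boolp reals.
Import Order.TTheory GRing.Theory Num.Theory.
Local Open Scope ring_scope.

(* An automorphism F of G maps the maximum independent sets of G_J bijectively
   onto those of G_(F J), and those containing a onto those containing F a.
   Since q is invariant under isomorphism of induced subgraphs, q (F J) = q J,
   so reindexing the sum defining alpha by J |-> F J gives alpha (F a) = alpha a.
   Node symmetry makes every node an image F a, so alpha is constant, and the
   penalty CDF and payoff, which depend on the node only through alpha, agree. *)

Lemma imset_can {T : finType} {f g : T -> T} :
  cancel f g -> cancel (fun A : {set T} => f @: A) (fun A => g @: A).
Proof.
move=> fK A; rewrite -imset_comp; apply/setP => x.
apply/imsetP/idP => [[y yA ->] | xA]; first by rewrite /= fK.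
by exists x; rewrite //= fK.
Qed.

Lemma imset_sep (T U : finType) (f : T -> U) (A : {set T}) (p : pred U) :
  [set y in f @: A | p y] = f @: [set x in A | p (f x)].
Proof.
apply/setP => y; rewrite inE; apply/andP/imsetP.
  by case=> /imsetP [x xA ->] px; exists x; rewrite // inE xA.
by case=> x; rewrite inE => /andP [xA px] ->; split; first exact: imset_f.
Qed.

Section Automorphisms.
Variables (V : finType) (e : rel V).

Lemma independent_imset (F : V -> V) (I : {set V}) :
  (forall x y, e (F x) (F y) = e x y) ->
  independent e I -> independent e (F @: I).
Proof.
move=> Fe /forallP indI; apply/forallP => Fx; apply/implyP => /imsetP [x xI ->].
apply/forallP => Fy; apply/implyP => /imsetP [y yI ->].
by rewrite Fe; move: (indI x); rewrite xI => /forallP/(_ y); rewrite yI.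
Qed.

Lemma induced_iso_imset (F : V -> V) (J : {set V}) :
  automorphism e F -> induced_iso e J (F @: J).
Proof.
case=> /bij_inj Finj Fe; exists F; split => // x y _ _; exact: Finj.
Qed.

Lemma max_indep_imset_sub (F G : V -> V) (J I : {set V}) :
  cancel F G -> cancel G F -> (forall x y, e (F x) (F y) = e x y) ->
  I \in max_indep e J -> F @: I \in max_indep e (F @: J).
Proof.
move=> FK GK Fe; have Ge x y : e (G x) (G y) = e x y by rewrite -Fe !GK.
rewrite !inE => /and3P [indI sIJ /forallP maxI].
rewrite independent_imset // imsetS //=; apply/forallP => I'.
apply/implyP => /andP [indI' sI'FJ].
have := maxI (G @: I'); rewrite independent_imset //= -(imset_can FK J) imsetS //=.
by rewrite !card_imset //; [exact: can_inj FK | exact: can_inj GK].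
Qed.

Variables (F G : V -> V).
Hypotheses (FK : cancel F G) (GK : cancel G F).
Hypothesis Fe : forall x y, e (F x) (F y) = e x y.

Lemma max_indep_imset (J : {set V}) :
  max_indep e (F @: J) = (fun I : {set V} => F @: I) @: max_indep e J.
Proof.
apply/setP => I; apply/idP/imsetP => [IFJ | [I' I'J ->]].
  have Ge x y : e (G x) (G y) = e x y by rewrite -Fe !GK.
  exists (G @: I); last by rewrite (imset_can GK).
  by rewrite -(imset_can FK J); exact: max_indep_imset_sub IFJ.
exact: max_indep_imset_sub.
Qed.

Lemma alpha_imset (R : realType) (q : {set V} -> R) (a : V) :
  (forall J : {set V}, q (F @: J) = q J) -> alpha e q (F a) = alpha e q a.
Proof.
move=> qF; have Finj := can_inj FK; have imF_inj := imset_inj Finj.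
have memF (I : {set V}) : (F a \in F @: I) = (a \in I) by exact: mem_imset.
rewrite /alpha (reindex_inj imF_inj) /=.
apply: eq_big => [J | J _]; first by rewrite imset_eq0.
rewrite qF max_indep_imset imset_sep !card_imset //.
by under eq_finset => I do rewrite memF.
Qed.

End Automorphisms.

Lemma alpha_node_symmetric (R : realType) (V : finType) (e : rel V)
  (q : {set V} -> R) (a b : V) :
  node_symmetric e -> (forall J K, induced_iso e J K -> q J = q K) ->
  alpha e q a = alpha e q b.
Proof.
move=> symG qiso; have [F [autF <-]] := symG a b.
have [[G FK GK] Fe] := autF.
symmetry; apply: (@alpha_imset V e F G FK GK Fe) => J.
by rewrite (qiso _ _ (@induced_iso_imset V e F J autF)).
Qed.

Theorem lemma12 (R : realType) (V : finType) (e : rel V)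
  (l m : nat) (c v : R) (g1 f1 : R -> R) (q : {set V} -> R) :
  simple_graph e -> node_symmetric e ->
  (1 <= m)%N -> (m < l)%N ->
  (forall x y, x < y -> g1 x < g1 y) -> continuousR g1 ->
  (forall x, f1 (g1 x) = x) ->
  (forall J, 0 <= q J) -> \sum_(J : {set V}) q J = 1 -> 0 < q set0 ->
  (forall J K, induced_iso e J K -> q J = q K) ->
  (forall a b : V, alpha e q a = alpha e q b) /\
  (forall a b : V,
     phi l m c v f1 g1 (alpha e q a) = phi l m c v f1 g1 (alpha e q b) /\
     payoff l m c v f1 g1 (alpha e q a) = payoff l m c v f1 g1 (alpha e q b)).
Proof.
move=> _ symG _ _ _ _ _ _ _ _ qiso.
have alpha_const a b : alpha e q a = alpha e q b by exact: alpha_node_symmetric.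
by split=> // a b; rewrite (alpha_const a b).
Qed.
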